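(* Let $0\le\theta\le\frac{\pi}{2}$. For each positive integer $N$, let $A_N(\theta)$ be the $N\times N$ matrix with entries $\frac{\cos((m-n)\theta)}{m-n}$ for $m\neq n$ and $0$ on the diagonal, and let $B_N(\theta)$ be the $N\times N$ matrix with entries $\frac{\sin((m-n)\theta)}{m-n}$ for $m\neq n$ and $\theta$ on the diagonal ($m,n=1,\dots,N$). Then \begin{enumerate} \item[(1)] $\displaystyle\lim_{N\to\infty} \frac{\operatorname{trace}(A_N(\theta)^2)}{N} = -\left(\frac{\pi^2}{3}+\theta^2-\pi\theta\right)$; \item[(2)] $\displaystyle\lim_{N\to\infty} \frac{\operatorname{trace}(B_N(\theta)^2)}{N} = \pi\theta$. \end{enumerate} *)

From mathcomp Require Import all_boot all_algebra.
From mathcomp Require Import Rstruct.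
From Stdlib Require Import Reals.

Set Implicit Arguments.
Unset Strict Implicit.
Unset Printing Implicit Defensive.

(* Indices m,n : 'I_N stand for 1..N; only the difference m - n matters. *)
Definition idiff (N : nat) (m n : 'I_N) : R :=
  (INR (nat_of_ord m) - INR (nat_of_ord n))%R.

Definition A_mat (N : nat) (theta : R) : 'M[R]_N :=
  \matrix_(m < N, n < N)
    (if m == n then 0%R
     else (cos (idiff m n * theta) / idiff m n)%R).

Definition B_mat (N : nat) (theta : R) : 'M[R]_N :=
  \matrix_(m < N, n < N)
    (if m == n then theta
     else (sin (idiff m n * theta) / idiff m n)%R).

(* Since (M^2)_ii = sum_j M_ij M_ji and M_ij M_ji depends only on k = |i - j|, say it is h k,
   trace (M_N^2) / N = h 0 + 2 sum_{k=1}^N h k - (2/N) sum_{k=1}^N k h k, and the last term is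
   O(log N / N) once |h k| <= 1/k^2.  With cos^2 = 1 - sin^2 both limits reduce to Basel's sum
   and to S(theta) = sum_k sin^2(k theta)/k^2 = theta (pi - theta)/2 on [0, pi].

   For the latter, the Fejer identity sin^2(L x) = sin^2 x * sum_{J<L} D_J(x) and the vanishing of
   sum_k cos(2 pi j k / M) give, for M = 2n+1 and a = pi/M, the exact identity
   sum_{k=1}^n sin^2(k L a) / sin^2(k a) = L (M - L) / 2.  Replacing sin(k a) by k a costs O(1/n),
   rounding theta down to the grid L a costs O(log n / n) (each term is k-Lipschitz in theta),
   so the partial sums of S converge.  Basel then follows from S(pi/2): the odd terms of
   sum 1/k^2 are those of S(pi/2) and the even ones are a quarter of the whole. *)

From Stdlib Require Import Reals Lra Lia.
From mathcomp Require Import all_boot all_algebra.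
From mathcomp Require Import Rstruct.
From mathcomp Require Import zify.

Local Open Scope R_scope.

Fixpoint rsum (f : nat -> R) (n : nat) : R :=
  match n with O => 0 | S m => rsum f m + f m end.

Lemma rsum_ext f g n : (forall k, (k < n)%nat -> f k = g k) -> rsum f n = rsum g n.
Proof.
elim: n => [|n IH] H //=; rewrite IH ?H //; move=> k Hk; apply: H; lia.
Qed.

Lemma rsumD f g n : rsum (fun k => f k + g k) n = rsum f n + rsum g n.
Proof. elim: n => [|n IH] /=; [lra | rewrite IH; lra]. Qed.

Lemma rsumB f g n : rsum (fun k => f k - g k) n = rsum f n - rsum g n.
Proof. elim: n => [|n IH] /=; [lra | rewrite IH; lra]. Qed.

Lemma rsumZ c f n : rsum (fun k => c * f k) n = c * rsum f n.
Proof. elim: n => [|n IH] /=; [lra | rewrite IH; lra]. Qed.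

Lemma rsum_const c n : rsum (fun _ => c) n = INR n * c.
Proof. elim: n => [|n IH]; first by simpl; lra. by rewrite S_INR /= IH; lra. Qed.

Lemma rsum_le f g n : (forall k, (k < n)%nat -> f k <= g k) -> rsum f n <= rsum g n.
Proof.
elim: n => [|n IH] H /=; first lra.
have := H n ltac:(lia); have := IH (fun k Hk => H k ltac:(lia)); lra.
Qed.

Lemma rsum_bounds f lo hi n : (forall k, (k < n)%nat -> lo <= f k <= hi) ->
  INR n * lo <= rsum f n <= INR n * hi.
Proof.
move=> H; rewrite -!rsum_const; split; apply: rsum_le => k /H; lra.
Qed.

Lemma Rabs_rsum_le f n : Rabs (rsum f n) <= rsum (fun k => Rabs (f k)) n.
Proof.
elim: n => [|n IH] /=; first by rewrite Rabs_R0; lra.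
have := Rabs_triang (rsum f n) (f n); lra.
Qed.

Lemma rsum_recl f n : rsum f (S n) = f O + rsum (fun k => f (S k)) n.
Proof.
elim: n => [|n IH]; first by simpl; lra.
by rewrite [rsum f n.+2]/= -/(rsum f n.+1) IH /=; lra.
Qed.

Lemma rsum_cat f n m : rsum f (n + m) = rsum f n + rsum (fun k => f (n + k)%nat) m.
Proof. elim: m => [|m IH] /=; [rewrite addn0; lra | rewrite addnS /= IH; lra]. Qed.

Lemma rsum_rev f n : rsum f n = rsum (fun k => f (n - 1 - k)%nat) n.
Proof.
elim: n f => [|n IH] f //.
rewrite rsum_recl IH /= (rsum_ext _ (fun k => f (n.+1 - 1 - k)%nat)); last first.
  by move=> k Hk; congr f; lia.
have -> : (n.+1 - 1 - n = 0)%nat by lia.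
lra.
Qed.

Lemma exchange_rsum (F : nat -> nat -> R) n m :
  rsum (fun i => rsum (F i) m) n = rsum (fun j => rsum (fun i => F i j) n) m.
Proof.
elim: n => [|n IH] /=; first by rewrite rsum_const; lra.
by rewrite IH -rsumD.
Qed.

Lemma sum_f_R0_rsum f n : sum_f_R0 f n = rsum f (S n).
Proof. elim: n => [|n IH] /=; [lra | rewrite IH /=; lra]. Qed.

Lemma big_ord_rsum (f : nat -> R) n : (\sum_(i < n) f i)%R = rsum f n.
Proof.
elim: n => [|n IH]; first by rewrite big_ord0.
by rewrite big_ord_recr /= IH.
Qed.

Lemma Rdiv_ge0 a d : 0 < d -> 0 <= a -> 0 <= a / d.
Proof. by move=> Hd Ha; apply: Rle_mult_inv_pos. Qed.

Lemma Rdiv_le_l a c d : 0 < d -> a <= c * d -> a / d <= c.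
Proof.
move=> Hd H; apply: (Rmult_le_reg_r d) => //.
by rewrite /Rdiv Rmult_assoc Rinv_l; lra.
Qed.

Lemma Rdiv_le_cross x y d1 d2 : 0 < d1 -> 0 < d2 -> x * d2 <= y * d1 -> x / d1 <= y / d2.
Proof.
move=> H1 H2 H.
replace (x / d1) with ((x * d2) / (d1 * d2)) by (field; lra).
replace (y / d2) with ((y * d1) / (d1 * d2)) by (field; lra).
apply: Rmult_le_compat_r => //; left; apply: Rinv_0_lt_compat; nra.
Qed.

Lemma INR_floor x : 0 <= x -> exists L : nat, INR L <= x < INR L + 1.
Proof.
move=> /RleP Hx; have /andP [H1 H2] := Num.Theory.truncn_itv Hx.
exists (Num.Def.truncn x).
by move/RleP: H1; move/RltP: H2; rewrite -!INRE S_INR; lra.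
Qed.

Lemma cv_squeeze (u w : nat -> R) l :
  (forall n, (1 <= n)%nat -> Rabs (u n - l) <= Rabs (w n)) -> Un_cv w 0 -> Un_cv u l.
Proof.
move=> H Hw eps Heps; case: (Hw eps Heps) => N HN; exists (N + 1)%nat => n Hn.
apply: Rle_lt_trans (H n _) _; first lia.
by have := HN n ltac:(lia); rewrite /R_dist Rminus_0_r.
Qed.

Lemma cv_const c : Un_cv (fun _ => c) c.
Proof. by move=> eps Heps; exists O => n _; rewrite /R_dist Rminus_diag Rabs_R0. Qed.

Lemma cv_double (u : nat -> R) l : Un_cv u l -> Un_cv (fun k => u (k + k)%nat) l.
Proof. move=> Hu eps /Hu [N HN]; exists N => n Hn; apply: HN; lia. Qed.

Lemma cv_inv_succ : Un_cv (fun n => 1 / (INR n + 1)) 0.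
Proof.
move=> eps Heps.
have [L [_ HL]] := INR_floor _ (Rdiv_ge0 1 eps Heps ltac:(lra)).
exists L => n Hn.
have HnL : INR L <= INR n by apply: le_INR; lia.
have Hn0 := pos_INR n; have HL0 := pos_INR L.
rewrite /R_dist Rminus_0_r Rabs_right; last by apply/Rle_ge/Rdiv_ge0; lra.
apply: (Rle_lt_trans _ (1 / (INR L + 1))); first by apply: Rdiv_le_cross; lra.
have : 1 < eps * (INR L + 1).
  have E : eps * (1 / eps) = 1 by field; lra.
  by rewrite -E; apply: Rmult_lt_compat_l; lra.
move=> H; apply: (Rmult_lt_reg_r (INR L + 1)); first lra.
by replace (1 / (INR L + 1) * (INR L + 1)) with 1 by (field; lra); lra.
Qed.

Definition harmonic (n : nat) : R := rsum (fun k => 1 / INR (S k)) n.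

Lemma harmonic_ge0 n : 0 <= harmonic n.
Proof.
have := rsum_bounds (fun k => 1 / INR (S k)) 0 1 n.
rewrite Rmult_0_r => H; apply: (proj1 (H _)) => k _.
have := lt_0_INR k.+1 ltac:(lia); split; first by apply: Rdiv_ge0; lra.
by apply: Rdiv_le_l; rewrite ?S_INR; have := pos_INR k; lra.
Qed.

Lemma harmonic_div_cv : Un_cv (fun n => harmonic n / INR n) 0.
Proof.
have H1 : Un_cv (fun k => 1 / INR (S k)) 0.
  by apply: Un_cv_ext cv_inv_succ => n; rewrite S_INR.
apply: cv_squeeze (Cesaro_1 _ _ H1) => n Hn1.
rewrite sum_f_R0_rsum; have -> : S (Init.Nat.pred n) = n by lia.
by rewrite /harmonic !Rminus_0_r; lra.
Qed.


Definition natdist (i j : nat) : nat := (i - j + (j - i))%nat.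

Lemma natdistC i j : natdist i j = natdist j i.
Proof. rewrite /natdist; lia. Qed.

Lemma rsum_natdist_last h N : rsum (fun i => h (natdist i N)) N = rsum (fun k => h (S k)) N.
Proof.
elim: N h => [|N IH] h //.
rewrite rsum_recl (rsum_ext _ (fun k => h (natdist k N))); last first.
  by move=> k _; congr h; rewrite /natdist; lia.
rewrite IH /=; have -> : natdist 0 N.+1 = N.+1 by rewrite /natdist; lia.
lra.
Qed.

Lemma rsum2_natdist h N :
  rsum (fun i => rsum (fun j => h (natdist i j)) N) N =
  INR N * h O + 2 * rsum (fun k => (INR N - INR k - 1) * h (S k)) N.
Proof.
elim: N => [|N IH]; first by simpl; lra.
rewrite [LHS](rsum_ext _ (fun i => rsum (fun j => h (natdist i j)) N + h (natdist i N))) //.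
rewrite rsumD [rsum _ N.+1]/= [rsum (fun i => h (natdist i N)) N.+1]/= IH rsum_natdist_last.
rewrite (rsum_ext (fun j => h (natdist N j)) (fun j => h (natdist j N))); last first.
  by move=> k _; rewrite natdistC.
rewrite rsum_natdist_last.
have -> : natdist N N = O by rewrite /natdist; lia.
rewrite (rsum_ext (fun k => (INR N.+1 - INR k - 1) * h k.+1)
   (fun k => (INR N - INR k - 1) * h k.+1 + h k.+1)); last first.
  by move=> k _; rewrite S_INR; ring.
by rewrite S_INR rsumD /=; ring.
Qed.

Lemma mxtrace_sqr_natdist N (M : 'M[R]_N) (h : nat -> R) :
  (forall i j : 'I_N, M i j * M j i = h (natdist i j)) ->
  mxtrace (M *m M) = INR N * h O + 2 * rsum (fun k => (INR N - INR k - 1) * h (S k)) N.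
Proof.
move=> HM; rewrite /mxtrace -rsum2_natdist -big_ord_rsum.
apply: eq_bigr => i _; rewrite mxE -big_ord_rsum.
by apply: eq_bigr => j _; exact: HM.
Qed.

Lemma mxtrace_sqr_natdist_div N (M : 'M[R]_N) h : (1 <= N)%nat ->
  (forall i j : 'I_N, M i j * M j i = h (natdist i j)) ->
  mxtrace (M *m M) / INR N =
  h O + 2 * rsum (fun k => h (S k)) N - 2 * (rsum (fun k => INR (S k) * h (S k)) N / INR N).
Proof.
move=> HN HM; rewrite (mxtrace_sqr_natdist _ _ _ HM).
have HNR : 0 < INR N by apply: lt_0_INR; lia.
rewrite (rsum_ext _ (fun k => INR N * h (S k) - INR (S k) * h (S k))); last first.
  by move=> k _; rewrite S_INR; ring.
by rewrite rsumB rsumZ; field; lra.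
Qed.

Lemma weighted_mean_cv (g : nat -> R) :
  (forall k, Rabs (INR (S k) * g k) <= 1 / INR (S k)) ->
  Un_cv (fun N => rsum (fun k => INR (S k) * g k) N / INR N) 0.
Proof.
move=> Hg; apply: cv_squeeze harmonic_div_cv => n Hn1.
have HnR : 0 < INR n by apply: lt_0_INR; lia.
have Hh := harmonic_ge0 n.
rewrite !Rminus_0_r (Rabs_right (harmonic n / INR n)); last by apply/Rle_ge/Rdiv_ge0.
rewrite /Rdiv Rabs_mult Rabs_inv (Rabs_right (INR n)); last lra.
apply: Rmult_le_compat_r; first by left; apply: Rinv_0_lt_compat.
by apply: Rle_trans (Rabs_rsum_le _ _) _; apply: rsum_le => k _; exact: Hg.
Qed.

Lemma mxtrace_sqr_div_cv (M : forall N, 'M[R]_N) (h : nat -> R) s :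
  (forall N (i j : 'I_N), M N i j * M N j i = h (natdist i j)) ->
  (forall k, Rabs (h (S k)) <= 1 / INR (S k) ^ 2) ->
  Un_cv (rsum (fun k => h (S k))) s ->
  Un_cv (fun k => mxtrace (M k.+1 *m M k.+1) / INR k.+1) (h O + 2 * s).
Proof.
move=> HM Hh Hs.
have Herr : Un_cv (fun N => rsum (fun k => INR (S k) * h (S k)) N / INR N) 0.
  apply: weighted_mean_cv => k.
  have Hk : 0 < INR (S k) by apply: lt_0_INR; lia.
  rewrite Rabs_mult Rabs_right; last lra.
  replace (1 / INR (S k)) with (INR (S k) * (1 / INR (S k) ^ 2)) by (field; lra).
  by apply: Rmult_le_compat_l; [lra | exact: Hh].
have Hlim := CV_minus _ _ _ _ (CV_plus _ _ _ _ (cv_const (h O)) (CV_mult _ _ _ _ (cv_const 2) Hs))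
  (CV_mult _ _ _ _ (cv_const 2) Herr).
rewrite Rmult_0_r Rminus_0_r in Hlim.
apply: Un_cv_ext (CV_shift' _ 1 _ Hlim) => k.
by rewrite Nat.add_1_r (mxtrace_sqr_natdist_div _ (M k.+1) h). 
Qed.


Lemma sin2_sub_sin2 a b : sin a ^ 2 - sin b ^ 2 = sin (a + b) * sin (a - b).
Proof.
rewrite sin_plus sin_minus.
have := sin2_cos2 a; have := sin2_cos2 b; rewrite /Rsqr; nra.
Qed.

Lemma Rabs_sin_le x : Rabs (sin x) <= Rabs x.
Proof.
have Hpos y : 0 <= y -> Rabs (sin y) <= y.
  move=> Hy; case: (Req_dec y 0) => [->|Hy0]; first by rewrite sin_0 Rabs_R0; lra.
  have Hlt := sin_lt_x y ltac:(lra); have HB := SIN_bound y.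
  case: (Rle_lt_dec 1 y) => H1; first by apply: Rabs_le; lra.
  have : 0 < sin y by apply: sin_gt_0; have := PI2_3_2; lra.
  by move=> ?; rewrite Rabs_right; lra.
case: (Rle_lt_dec 0 x) => Hx; first by rewrite (Rabs_right x); [apply: Hpos | ]; lra.
by rewrite (Rabs_left x) //; have := Hpos (- x) ltac:(lra); rewrite sin_neg Rabs_Ropp.
Qed.

Lemma sin2_lipschitz a b : Rabs (sin a ^ 2 - sin b ^ 2) <= Rabs (a - b).
Proof.
rewrite sin2_sub_sin2 Rabs_mult.
have := Rabs_sin_le (a - b); have := SIN_bound (a + b); have := Rabs_pos (sin (a - b)).
have : Rabs (sin (a + b)) <= 1 by apply: Rabs_le; have := SIN_bound (a + b); lra.
nra.
Qed.

Lemma sin_INR_PI L : sin (INR L * PI) = 0.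
Proof. by apply: sin_eq_0_1; exists (Z.of_nat L); rewrite -INR_IZR_INZ. Qed.

Lemma cos_INR_PI_sqr L : cos (INR L * PI) ^ 2 = 1.
Proof. by have := sin2_cos2 (INR L * PI); rewrite sin_INR_PI /Rsqr; nra. Qed.

Lemma sin_grid_gt0 k M : (0 < k < M)%nat -> 0 < sin (INR k * (PI / INR M)).
Proof.
move=> /andP [Hk HkM].
have HkR : 0 < INR k by apply: lt_0_INR; lia.
have HkMR : INR k < INR M by apply: lt_INR; lia.
have HP := PI_RGT_0.
replace (INR k * (PI / INR M)) with (PI * (INR k / INR M)) by (field; lra).
have Hq : 0 < INR k / INR M < 1.
  split; first by apply: Rdiv_lt_0_compat; lra.
  replace (INR k / INR M) with (1 - (INR M - INR k) / INR M) by (field; lra).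
  have : 0 < (INR M - INR k) / INR M by apply: Rdiv_lt_0_compat; lra.
  lra.
by apply: sin_gt_0; nra.
Qed.

Definition dirichlet (J : nat) (x : R) : R :=
  1 + 2 * rsum (fun j => cos (2 * INR (S j) * x)) J.

Definition fejer (L : nat) (x : R) : R := rsum (fun J => dirichlet J x) L.

Lemma sin_mul_dirichlet J x : sin x * dirichlet J x = sin ((2 * INR J + 1) * x).
Proof.
elim: J => [|J IH]; first by rewrite /dirichlet /=; ring_simplify; f_equal; ring.
have -> : dirichlet J.+1 x = dirichlet J x + 2 * cos (2 * INR J.+1 * x).
  by rewrite /dirichlet /=; ring.
rewrite Rmult_plus_distr_l IH.
set A := 2 * INR J.+1 * x.
replace ((2 * INR J + 1) * x) with (A - x) by (rewrite /A S_INR; ring).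
replace ((2 * INR J.+1 + 1) * x) with (A + x) by (rewrite /A; ring).
by rewrite sin_plus sin_minus; ring.
Qed.

Lemma sin2_mul_fejer L x : sin x ^ 2 * fejer L x = sin (INR L * x) ^ 2.
Proof.
elim: L => [|L IH]; first by rewrite /fejer /= Rmult_0_l sin_0; ring.
have -> : fejer L.+1 x = fejer L x + dirichlet L x by [].
have E : sin x ^ 2 * dirichlet L x = sin x * sin ((2 * INR L + 1) * x).
  by rewrite -sin_mul_dirichlet; ring.
rewrite Rmult_plus_distr_l IH E.
have := sin2_sub_sin2 (INR L.+1 * x) (INR L * x).
replace (INR L.+1 * x + INR L * x) with ((2 * INR L + 1) * x) by (rewrite S_INR; ring).
replace (INR L.+1 * x - INR L * x) with x by (rewrite S_INR; ring).
lra.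
Qed.

Lemma fejer0 L : fejer L 0 = INR L ^ 2.
Proof.
elim: L => [|L IH]; first by rewrite /fejer /=; ring.
rewrite /fejer [rsum _ L.+1]/= -/(fejer L 0) IH /dirichlet.
rewrite (rsum_ext _ (fun _ => 1)); last by move=> j _; rewrite Rmult_0_r cos_0.
by rewrite rsum_const S_INR; ring.
Qed.

Lemma rsum_cos_telescope K b :
  2 * sin (b / 2) * rsum (fun k => cos (INR k * b)) K = sin (INR K * b - b / 2) + sin (b / 2).
Proof.
elim: K => [|K IH].
  by rewrite /= Rmult_0_l; replace (0 - b / 2) with (- (b / 2)) by ring; rewrite sin_neg; ring.
rewrite [rsum _ K.+1]/= Rmult_plus_distr_l IH.
replace (INR K.+1 * b - b / 2) with (INR K * b + b / 2) by (rewrite S_INR; field).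
by rewrite sin_plus sin_minus; ring.
Qed.

Lemma rsum_cos_root_unity M j : (0 < j < M)%nat ->
  rsum (fun k => cos (INR k * (2 * PI * INR j / INR M))) M = 0.
Proof.
move=> Hj.
have HM : 0 < INR M by apply: lt_0_INR; lia.
set b := 2 * PI * INR j / INR M.
have Hs : 0 < sin (b / 2).
  by have := sin_grid_gt0 _ _ Hj; congr (0 < sin _); rewrite /b; field; lra.
have := rsum_cos_telescope M b.
replace (INR M * b - b / 2) with (- (b / 2) + 2 * INR j * PI) by (rewrite /b; field; lra).
rewrite sin_period sin_neg Rplus_opp_l => /Rmult_integral [|//]; lra.
Qed.

Lemma rsum_fejer_grid M L : (0 < M)%nat -> (L <= M)%nat ->
  rsum (fun k => fejer L (INR k * (PI / INR M))) M = INR L * INR M.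
Proof.
move=> HM HL.
have HMR : 0 < INR M by apply: lt_0_INR; lia.
rewrite /fejer exchange_rsum (rsum_ext _ (fun _ => INR M)); first by rewrite rsum_const.
move=> J HJ; rewrite /dirichlet rsumD rsum_const rsumZ exchange_rsum.
rewrite (rsum_ext _ (fun _ => 0)); first by rewrite rsum_const; ring.
move=> j Hj; rewrite -(rsum_cos_root_unity M j.+1); last lia.
by apply: rsum_ext => k _; congr cos; field; lra.
Qed.

Definition sin2_ratio (a phi : R) (k : nat) : R := sin (INR k * phi) ^ 2 / sin (INR k * a) ^ 2.

Lemma sin2_ratio_sum M L : (0 < M)%nat -> (L <= M)%nat ->
  rsum (fun k => sin2_ratio (PI / INR M) (INR L * (PI / INR M)) (S k)) (M - 1) =
  INR L * (INR M - INR L).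
Proof.
move=> HM HL.
have HMR : 0 < INR M by apply: lt_0_INR; lia.
have := rsum_fejer_grid _ _ HM HL.
case: M HM HL HMR => [|M] // _ HL HMR.
rewrite rsum_recl Rmult_0_l fejer0; have -> : (M.+1 - 1 = M)%nat by lia.
rewrite (rsum_ext _ (fun k => sin2_ratio (PI / INR M.+1) (INR L * (PI / INR M.+1)) k.+1)).
  by move=> E; lra.
move=> k Hk; set x := INR k.+1 * (PI / INR M.+1).
have Hx : 0 < sin x by apply: sin_grid_gt0; lia.
rewrite /sin2_ratio -/x.
replace (INR k.+1 * (INR L * (PI / INR M.+1))) with (INR L * x) by (rewrite /x; ring).
by rewrite -(sin2_mul_fejer L x); field; lra.
Qed.


Lemma sin2_ratio_reflect M L k : (0 < M)%nat -> (k <= M)%nat ->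
  sin2_ratio (PI / INR M) (INR L * (PI / INR M)) (M - k) =
  sin2_ratio (PI / INR M) (INR L * (PI / INR M)) k.
Proof.
move=> HM Hk.
have HMR : 0 < INR M by apply: lt_0_INR; lia.
rewrite /sin2_ratio minus_INR; last lia.
replace ((INR M - INR k) * (PI / INR M)) with (PI - INR k * (PI / INR M)) by (field; lra).
replace ((INR M - INR k) * (INR L * (PI / INR M)))
  with (INR L * PI - INR k * (INR L * (PI / INR M))) by (field; lra).
rewrite sin_PI_x sin_minus sin_INR_PI; congr (_ / _).
by have := cos_INR_PI_sqr L; nra.
Qed.

Lemma rsum_half_sym n (t : nat -> R) :
  (forall k, (k <= n + n + 1)%nat -> t (n + n + 1 - k)%nat = t k) ->
  rsum (fun k => t (S k)) (n + n) = 2 * rsum (fun k => t (S k)) n.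
Proof.
move=> Ht; rewrite rsum_cat (rsum_ext (fun k => t (n + k).+1) (fun k => t (n - k)%nat)); last first.
  by move=> k Hk; rewrite -Ht; [congr t | ]; lia.
rewrite [X in _ + X = _]rsum_rev (rsum_ext (fun k => t (n - (n - 1 - k))%nat) (fun k => t k.+1)).
  by ring.
by move=> k Hk; congr t; lia.
Qed.

Definition grid_step (n : nat) : R := PI / INR (n + n + 1).

Lemma sin2_ratio_half_sum n L : (L <= n + n + 1)%nat ->
  rsum (fun k => sin2_ratio (grid_step n) (INR L * grid_step n) (S k)) n =
  INR L * (INR (n + n + 1) - INR L) / 2.
Proof.
move=> HL; rewrite /grid_step; set a := PI / _; have HM : (0 < n + n + 1)%nat by lia.
have := sin2_ratio_sum _ _ HM HL.
have -> : (n + n + 1 - 1 = n + n)%nat by lia.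
rewrite (rsum_half_sym n (sin2_ratio a (INR L * a))); first lra.
by move=> k Hk; exact: sin2_ratio_reflect.
Qed.

Lemma inv_sin2_sub_inv_sqr y : 0 < y <= 2 ->
  0 < sin y /\ 0 <= 1 / sin y ^ 2 - 1 / y ^ 2 <= 3.
Proof.
move=> Hy.
have [Hlb _] := pre_sin_bound y 0 ltac:(lra) ltac:(lra).
have E : sin_approx y (2 * 0 + 1) = y - y ^ 3 / 6 by rewrite /sin_approx /sin_term /=; field.
rewrite E in Hlb; have Hlt := sin_lt_x y ltac:(lra).
set s := sin y in Hlb Hlt *.
have Hy2 : y ^ 2 <= 4 by nra.
have Hs3 : y / 3 <= s by nra.
have Hs : 0 < s by lra.
split; first exact: Hs.
have Hd : 0 < s ^ 2 * y ^ 2 by apply: Rmult_lt_0_compat; nra.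
have H3 : (y - s) * (y + s) <= y ^ 3 / 6 * (2 * y) by apply: Rmult_le_compat; lra.
have H4 : y ^ 2 / 9 <= s ^ 2 by nra.
replace (1 / s ^ 2 - 1 / y ^ 2) with ((y ^ 2 - s ^ 2) / (s ^ 2 * y ^ 2)) by (field; lra).
split; first by apply: Rdiv_ge0 => //; nra.
apply: Rdiv_le_l => //.
have : y ^ 2 - s ^ 2 <= y ^ 4 / 3 by nra.
have : y ^ 4 / 3 <= 3 * (s ^ 2 * y ^ 2) by nra.
lra.
Qed.

Definition sin2_sum (th : R) (n : nat) : R :=
  rsum (fun k => sin (INR (S k) * th) ^ 2 / INR (S k) ^ 2) n.

Lemma sin2_sum_lipschitz th phi n :
  Rabs (sin2_sum th n - sin2_sum phi n) <= Rabs (th - phi) * harmonic n.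
Proof.
rewrite /sin2_sum /harmonic -rsumB -rsumZ.
apply: Rle_trans (Rabs_rsum_le _ _) _; apply: rsum_le => k _.
have Hk : 0 < INR k.+1 by apply: lt_0_INR; lia.
set s := sin (INR k.+1 * th) ^ 2 - sin (INR k.+1 * phi) ^ 2.
replace (sin (INR k.+1 * th) ^ 2 / INR k.+1 ^ 2 - sin (INR k.+1 * phi) ^ 2 / INR k.+1 ^ 2)
  with (s / INR k.+1 ^ 2) by (rewrite /s; field; lra).
have Hs : Rabs s <= INR k.+1 * Rabs (th - phi).
  apply: Rle_trans (sin2_lipschitz _ _) _.
  by rewrite -Rmult_minus_distr_l Rabs_mult Rabs_right; lra.
rewrite /Rdiv Rabs_mult Rabs_inv (Rabs_right (INR k.+1 ^ 2)); last by apply: Rle_ge; apply: pow_le; lra.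
replace (Rabs (th - phi) * (1 * / INR k.+1))
  with (INR k.+1 * Rabs (th - phi) * / INR k.+1 ^ 2) by (field; lra).
apply: Rmult_le_compat_r => //; left; apply: Rinv_0_lt_compat; apply: pow_lt; lra.
Qed.

(* Replacing sin (k pi / M) by k pi / M in the grid identity costs at most 3 per term. *)
Lemma sin2_sum_grid n L : (L <= n + n + 1)%nat ->
  Rabs (sin2_sum (INR L * grid_step n) n -
        INR L * grid_step n * (PI - INR L * grid_step n) / 2) <=
  PI ^ 2 / INR (n + n + 1) ^ 2 * (3 * INR n).
Proof.
move=> HL; have := sin2_ratio_half_sum n L HL; rewrite /grid_step.
set a := PI / _; set M := INR (n + n + 1); set phi := INR L * a => Hgrid.
have HP := PI_RGT_0.
have HMR : M = 2 * INR n + 1 by rewrite /M !plus_INR /=; ring.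
have HM : 0 < M by have := pos_INR n; lra.
have Hy k : (k < n)%nat -> 0 < INR (S k) * a <= 2.
  move=> Hk; have HkR : INR (S k) <= INR n by apply: le_INR; lia.
  have HkR0 : 0 < INR (S k) by apply: lt_0_INR; lia.
  split; first by apply: Rmult_lt_0_compat => //; apply: Rdiv_lt_0_compat.
  have : INR n * a <= 2.
    rewrite /a -/M; replace (INR n * (PI / M)) with (INR n * PI / M) by (field; lra).
    by apply: Rdiv_le_l => //; have := PI_4; nra.
  have : 0 < a by apply: Rdiv_lt_0_compat.
  nra.
set err := fun k => sin (INR (S k) * phi) ^ 2 *
  (1 / sin (INR (S k) * a) ^ 2 - 1 / (INR (S k) * a) ^ 2).
have Hsplit : rsum (fun k => sin2_ratio a phi (S k)) n = M ^ 2 / PI ^ 2 * sin2_sum phi n + rsum err n.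
  rewrite /sin2_sum -rsumZ -rsumD; apply: rsum_ext => k Hk.
  have [Hs _] := inv_sin2_sub_inv_sqr _ (Hy k Hk).
  have HkR0 : 0 < INR (S k) by apply: lt_0_INR; lia.
  rewrite /sin2_ratio /err /a -/M; field; rewrite /a -/M in Hs; repeat split; lra.
have Herr : 0 <= rsum err n <= 3 * INR n.
  have := rsum_bounds err 0 3 n; rewrite Rmult_0_r Rmult_comm; apply => k Hk.
  have [_ Hr] := inv_sin2_sub_inv_sqr _ (Hy k Hk).
  have := SIN_bound (INR (S k) * phi); rewrite /err; nra.
rewrite Hsplit in Hgrid.
have -> : sin2_sum phi n - phi * (PI - phi) / 2 = - (PI ^ 2 / M ^ 2 * rsum err n).
  have -> : sin2_sum phi n = PI ^ 2 / M ^ 2 * (INR L * (M - INR L) / 2 - rsum err n).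
    by rewrite -Hgrid; field; lra.
  by rewrite /phi /a -/M; field; lra.
rewrite Rabs_Ropp Rabs_right; last by apply: Rle_ge; apply: Rmult_le_pos; [apply: Rdiv_ge0|]; nra.
by apply: Rmult_le_compat_l; [apply: Rdiv_ge0; nra | lra].
Qed.


Lemma Rabs_parabola_sub p x y d : 0 <= x - y <= d -> - p <= x + y - p <= p ->
  Rabs (y * (p - y) / 2 - x * (p - x) / 2) <= d * p / 2.
Proof.
move=> Hd Hs.
replace (y * (p - y) / 2 - x * (p - x) / 2) with ((x - y) * (x + y - p) / 2) by field.
by apply: Rabs_le; split; nra.
Qed.

Lemma grid_floor n th : 0 <= th <= PI ->
  exists L : nat, (L <= n + n + 1)%nat /\ INR L * grid_step n <= th < INR L * grid_step n + grid_step n.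
Proof.
move=> Hth; have HP := PI_RGT_0.
have HM : 0 < INR (n + n + 1) by apply: lt_0_INR; lia.
have Ha : 0 < grid_step n by apply: Rdiv_lt_0_compat.
have [L [HL1 HL2]] := INR_floor (th / grid_step n) (Rdiv_ge0 th _ Ha ltac:(lra)).
have Eth : th / grid_step n * grid_step n = th by field; lra.
exists L; split.
  apply/leP/INR_le; apply: Rle_trans HL1 _; apply: Rdiv_le_l => //.
  by rewrite /grid_step; field_simplify; lra.
split; rewrite -Eth; first by apply: Rmult_le_compat_r; lra.
by have := Rmult_lt_compat_r _ _ _ Ha HL2; lra.
Qed.

Lemma sin2_sum_error th n : 0 <= th <= PI -> (1 <= n)%nat ->
  Rabs (sin2_sum th n - th * (PI - th) / 2) <= (4 * harmonic n + 56) / (INR n + 1).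
Proof.
move=> Hth Hn1; have HP := PI_RGT_0; have HP4 := PI_4.
have Hn : 1 <= INR n by have := le_INR 1 n ltac:(lia).
have HMR : INR (n + n + 1) = 2 * INR n + 1 by rewrite !plus_INR /=; ring.
have [L [HL [Hlo Hhi]]] := grid_floor n th Hth.
set a := grid_step n in Hlo Hhi; set phi := INR L * a in Hlo Hhi.
have Ha0 : 0 < a by apply: Rdiv_lt_0_compat; lra.
have Ha : a <= 4 / (INR n + 1) by rewrite /a /grid_step HMR; apply: Rdiv_le_cross; nra.
have Hlip := sin2_sum_lipschitz th phi n.
have Hgrid := sin2_sum_grid n L HL; rewrite -/a -/phi HMR in Hgrid.
have Hpar : Rabs (phi * (PI - phi) / 2 - th * (PI - th) / 2) <= a * PI / 2.
  apply: Rabs_parabola_sub; first lra.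
  have : 0 <= phi by apply: Rmult_le_pos; [apply: pos_INR | lra].
  lra.
have Hgrid' : PI ^ 2 / (2 * INR n + 1) ^ 2 * (3 * INR n) <= 48 / (INR n + 1).
  replace (PI ^ 2 / (2 * INR n + 1) ^ 2 * (3 * INR n))
    with (PI ^ 2 * (3 * INR n) / (2 * INR n + 1) ^ 2) by (field; lra).
  have HP2 : PI ^ 2 <= 16 by nra.
  by apply: Rdiv_le_cross; nra.
have Hh := harmonic_ge0 n.
have Hlip' : Rabs (th - phi) * harmonic n <= 4 / (INR n + 1) * harmonic n.
  by apply: Rmult_le_compat_r => //; apply: Rabs_le; lra.
have Hpar' : a * PI / 2 <= 8 / (INR n + 1).
  replace (8 / (INR n + 1)) with (4 / (INR n + 1) * 4 / 2) by (field; lra).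
  have : 0 <= a by lra.
  nra.
have Htri := Rabs_triang (sin2_sum th n - sin2_sum phi n) (sin2_sum phi n - phi * (PI - phi) / 2).
have Htri' := Rabs_triang (sin2_sum th n - phi * (PI - phi) / 2)
  (phi * (PI - phi) / 2 - th * (PI - th) / 2).
replace (sin2_sum th n - sin2_sum phi n + (sin2_sum phi n - phi * (PI - phi) / 2))
  with (sin2_sum th n - phi * (PI - phi) / 2) in Htri by ring.
replace (sin2_sum th n - phi * (PI - phi) / 2 + (phi * (PI - phi) / 2 - th * (PI - th) / 2))
  with (sin2_sum th n - th * (PI - th) / 2) in Htri' by ring.
replace ((4 * harmonic n + 56) / (INR n + 1))
  with (4 / (INR n + 1) * harmonic n + 48 / (INR n + 1) + 8 / (INR n + 1)) by (field; lra).
lra.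
Qed.

Lemma sin2_sum_cv th : 0 <= th <= PI -> Un_cv (sin2_sum th) (th * (PI - th) / 2).
Proof.
move=> Hth.
have Hw : Un_cv (fun n => 4 * (harmonic n / INR n) + 56 * (1 / (INR n + 1))) 0.
  have := CV_plus _ _ _ _ (CV_mult _ _ _ _ (cv_const 4) harmonic_div_cv)
    (CV_mult _ _ _ _ (cv_const 56) cv_inv_succ).
  by rewrite !Rmult_0_r Rplus_0_r.
apply: cv_squeeze Hw => n Hn1; apply: Rle_trans (sin2_sum_error _ _ Hth Hn1) _.
have Hn : 1 <= INR n by have := le_INR 1 n ltac:(lia).
have Hh := harmonic_ge0 n.
have Hq : harmonic n / (INR n + 1) <= harmonic n / INR n by apply: Rdiv_le_cross; nra.
have Hq0 : 0 <= harmonic n / INR n by apply: Rdiv_ge0; lra.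
have Hi0 : 0 <= 1 / (INR n + 1) by apply: Rdiv_ge0; lra.
rewrite Rabs_right; last lra.
replace ((4 * harmonic n + 56) / (INR n + 1))
  with (4 * (harmonic n / (INR n + 1)) + 56 * (1 / (INR n + 1))) by (field; lra).
lra.
Qed.

Definition inv_sqr_sum (n : nat) : R := rsum (fun k => 1 / INR (S k) ^ 2) n.

Lemma inv_sqr_sumS n : inv_sqr_sum n.+1 = inv_sqr_sum n + 1 / INR n.+1 ^ 2.
Proof. by []. Qed.

Lemma inv_sqr_sum_double n :
  inv_sqr_sum (n + n) = sin2_sum (PI / 2) (n + n) + inv_sqr_sum n / 4.
Proof.
elim: n => [|n IH]; first by rewrite /inv_sqr_sum /sin2_sum /=; field.
have -> : (n.+1 + n.+1 = (n + n).+2)%nat by lia.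
have ST m : sin2_sum (PI / 2) m.+1 =
    sin2_sum (PI / 2) m + sin (INR m.+1 * (PI / 2)) ^ 2 / INR m.+1 ^ 2 by [].
rewrite !inv_sqr_sumS !ST IH.
have -> : INR (n + n).+1 * (PI / 2) = PI / 2 + INR n * PI by rewrite S_INR plus_INR; field.
have -> : INR (n + n).+2 * (PI / 2) = INR n.+1 * PI by rewrite !S_INR plus_INR; field.
rewrite sin_INR_PI sin_plus sin_PI2 cos_PI2 Rmult_0_l Rplus_0_r Rmult_1_l cos_INR_PI_sqr.
have := pos_INR n; rewrite !S_INR plus_INR => Hn.
by field; lra.
Qed.

Lemma inv_sqr_sum_le n : inv_sqr_sum (S n) <= 2 - 1 / INR (S n).
Proof.
elim: n => [|n IH]; first by rewrite /inv_sqr_sum /=; lra.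
rewrite inv_sqr_sumS.
have Hn := pos_INR n; rewrite !S_INR in IH *.
have : 1 / (INR n + 1 + 1) ^ 2 <= 1 / (INR n + 1) - 1 / (INR n + 1 + 1).
  replace (1 / (INR n + 1) - 1 / (INR n + 1 + 1))
    with (1 / ((INR n + 1) * (INR n + 1 + 1))) by (field; lra).
  by apply: Rdiv_le_cross; nra.
lra.
Qed.

Lemma basel : Un_cv inv_sqr_sum (PI ^ 2 / 6).
Proof.
have Hterm k : 0 <= 1 / INR (S k) ^ 2.
  by apply: Rdiv_ge0; [apply: pow_lt; apply: lt_0_INR; lia | lra].
have Hgrow : Un_growing inv_sqr_sum.
  by move=> n; have := Hterm n; rewrite inv_sqr_sumS; lra.
have Hub : has_ub inv_sqr_sum.
  exists 2 => x [[|i] ->]; first by rewrite /inv_sqr_sum /=; lra.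
  have := inv_sqr_sum_le i; have : 0 <= 1 / INR (S i) by apply: Rdiv_ge0; [apply: lt_0_INR; lia | lra].
  lra.
have [z Hz] := growing_cv _ Hgrow Hub.
have Hdouble : Un_cv (fun n => inv_sqr_sum (n + n)) (PI / 2 * (PI - PI / 2) / 2 + z * / 4).
  have Hhalf : 0 <= PI / 2 <= PI by have := PI_RGT_0; lra.
  apply: Un_cv_ext (CV_plus _ _ _ _ (cv_double _ _ (sin2_sum_cv _ Hhalf))
    (CV_mult _ _ _ _ Hz (cv_const (/ 4)))) => n.
  by rewrite inv_sqr_sum_double.
have Ez := UL_sequence _ _ _ (cv_double _ _ Hz) Hdouble.
by have -> : PI ^ 2 / 6 = z by move: Ez; generalize PI => p Ez; field_simplify in Ez; lra.
Qed.


Lemma INR_sub_natdist (i j : nat) :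
  INR i - INR j = INR (natdist i j) \/ INR i - INR j = - INR (natdist i j).
Proof.
rewrite /natdist; case: (leqP j i) => Hij; [left | right].
- have -> : (i - j + (j - i) = i - j)%nat by lia.
  by rewrite minus_INR //; lia.
- have -> : (i - j + (j - i) = j - i)%nat by lia.
  rewrite minus_INR; [lra | lia].
Qed.

Lemma natdist_ord_neq0 N (i j : 'I_N) : i != j -> natdist i j <> O.
Proof. by move=> /eqP Hij Hd; apply: Hij; apply: ord_inj; move: Hd; rewrite /natdist; lia. Qed.

Definition A_prod (th : R) (k : nat) : R :=
  if k is O then 0 else - (cos (INR k * th) ^ 2 / INR k ^ 2).

Definition B_prod (th : R) (k : nat) : R :=
  if k is O then th ^ 2 else sin (INR k * th) ^ 2 / INR k ^ 2.

Lemma A_mat_prod N th (i j : 'I_N) : A_mat N th i j * A_mat N th j i = A_prod th (natdist i j).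
Proof.
rewrite !mxE /idiff; case: (eqVneq i j) => [->|Hij].
  by rewrite /natdist subnn /=; ring.
rewrite -(Ropp_minus_distr (INR i)).
have := INR_sub_natdist i j; case: (natdist i j) (natdist_ord_neq0 _ _ _ Hij) => [//|d] _.
have Hd : 0 < INR d.+1 by apply: lt_0_INR; lia.
by case=> ->; rewrite /A_prod ?Ropp_involutive -?Ropp_mult_distr_l ?cos_neg; field; lra.
Qed.

Lemma B_mat_prod N th (i j : 'I_N) : B_mat N th i j * B_mat N th j i = B_prod th (natdist i j).
Proof.
rewrite !mxE /idiff; case: (eqVneq i j) => [->|Hij].
  by rewrite /natdist subnn /=; ring.
rewrite -(Ropp_minus_distr (INR i)).
have := INR_sub_natdist i j; case: (natdist i j) (natdist_ord_neq0 _ _ _ Hij) => [//|d] _.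
have Hd : 0 < INR d.+1 by apply: lt_0_INR; lia.
by case=> ->; rewrite /B_prod ?Ropp_involutive -?Ropp_mult_distr_l ?sin_neg; field; lra.
Qed.

Lemma sqr_div_sqr_le x k : 0 <= x ^ 2 <= 1 -> Rabs (x ^ 2 / INR (S k) ^ 2) <= 1 / INR (S k) ^ 2.
Proof.
move=> Hx; have Hk : 0 < INR (S k) ^ 2 by apply: pow_lt; apply: lt_0_INR; lia.
rewrite Rabs_right; last by apply/Rle_ge/Rdiv_ge0; lra.
by apply: Rdiv_le_cross; nra.
Qed.

Lemma rsum_A_prod th n : rsum (fun k => A_prod th (S k)) n = sin2_sum th n - inv_sqr_sum n.
Proof.
rewrite /sin2_sum /inv_sqr_sum -rsumB; apply: rsum_ext => k _.
have := sin2_cos2 (INR k.+1 * th); have := lt_0_INR k.+1 ltac:(lia); rewrite /Rsqr => Hk Hsc.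
change (A_prod th k.+1) with (- (cos (INR k.+1 * th) ^ 2 / INR k.+1 ^ 2)).
replace (sin (INR k.+1 * th) ^ 2) with (1 - cos (INR k.+1 * th) ^ 2) by nra.
by field; lra.
Qed.

Theorem theorem3 (theta : R) (h0 : Rle 0 theta) (h1 : Rle theta (Rdiv PI 2)) :
  Un_cv (fun k : nat =>
           Rdiv (mxtrace (mulmx (A_mat k.+1 theta) (A_mat k.+1 theta)))
                (INR k.+1))
        (Ropp (PI ^ 2 / 3 + theta ^ 2 - PI * theta))%R
  /\
  Un_cv (fun k : nat =>
           Rdiv (mxtrace (mulmx (B_mat k.+1 theta) (B_mat k.+1 theta)))
                (INR k.+1))
        (Rmult PI theta).
Proof.
have Hth : 0 <= theta <= PI by have := PI_RGT_0; lra.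
have Hsin := sin2_sum_cv _ Hth.
split.
- have HA : Un_cv (rsum (fun k => A_prod theta (S k))) (theta * (PI - theta) / 2 - PI ^ 2 / 6).
    by apply: Un_cv_ext (CV_minus _ _ _ _ Hsin basel) => n; rewrite rsum_A_prod.
  have -> : - (PI ^ 2 / 3 + theta ^ 2 - PI * theta) =
            A_prod theta O + 2 * (theta * (PI - theta) / 2 - PI ^ 2 / 6) by rewrite /=; field.
  apply: (mxtrace_sqr_div_cv (fun N => A_mat N theta)) HA => [N i j | k]; first exact: A_mat_prod.
  rewrite /A_prod Rabs_Ropp; apply: sqr_div_sqr_le.
  by have := COS_bound (INR k.+1 * theta); nra.
- have -> : PI * theta = B_prod theta O + 2 * (theta * (PI - theta) / 2) by rewrite /=; field.
  apply: (mxtrace_sqr_div_cv (fun N => B_mat N theta)) Hsin => [N i j | k]; first exact: B_mat_prod.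
  by apply: sqr_div_sqr_le; have := SIN_bound (INR k.+1 * theta); nra.
Qed.
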